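(* Let $T$ be a rooted binary phylogenetic tree with root $\rho$ of out-degree 2 and children $\rho_1,\rho_2$, and let $\dot T_1,\dot T_2$ be as defined in the context. Under the $N_2$ model, $$RA_{\rm MP}(T)\ \ge\ \tfrac12\big(RA_{\rm MP}(\dot T_1)+RA_{\rm MP}(\dot T_2)\big).$$
   Context: A rooted binary phylogenetic tree is a finite tree with a distinguished root vertex, all edges directed away from it, in which the root has out-degree 2 or 1 (the edge at a root of out-degree 1 is the stem edge), and every other vertex has in-degree 1 and out-degree 0 or 2; out-degree-0 vertices are leaves. Under the Neyman 2-state model $N_2$, each edge $e$ carries a substitution probability $p_e\in[0,\frac12]$; given the root state, states propagate independently along edges, each edge changing state with probability $p_e$; $f$ is the restriction of the states to the leaves. Fitch sets: each leaf $x$ gets $\{f(x)\}$; a vertex with children $v_1,v_2$ gets $\mathrm{FS}(v_1)\cap\mathrm{FS}(v_2)$ if nonempty, else the union; a vertex with one child gets its child's set. $\mathrm{MP}$ chooses a uniformly random element of the root's Fitch set, and $RA_{\rm MP}$ of a tree is the probability that this choice equals the true root state. For $i=1,2$, $T_i$ is the maximal subtree of $T$ rooted at $\rho_i$, and $\dot T_i$ is $T_i$ together with the edge $(\rho,\rho_i)$ (with its substitution probability from $T$) as stem edge, rooted at $\rho$. *)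

From Stdlib Require Import Reals List Bool.
Import ListNotations.
Open Scope R_scope.

(* A rooted binary (sub)tree below a vertex: either a leaf, or a vertex with
   two children, each child edge carrying its N_2 substitution probability.
   Leaves are ordered left-to-right; a character is a list of leaf states. *)
Inductive tree : Type :=
| Leaf : tree
| Node : R -> tree -> R -> tree -> tree.

Fixpoint nleaves (t : tree) : nat :=
  match t with
  | Leaf => 1%nat
  | Node _ t1 _ t2 => (nleaves t1 + nleaves t2)%nat
  end.

Fixpoint valid (t : tree) : Prop :=
  match t with
  | Leaf => True
  | Node p1 t1 p2 t2 =>
      0 <= p1 <= 1/2 /\ 0 <= p2 <= 1/2 /\ valid t1 /\ valid t2
  end.

Definition trans (p : R) (b c : bool) : R := if Bool.eqb b c then 1 - p else p.

(* P(leaf states = f | state at the top vertex of t = b) *)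
Fixpoint cond_prob (t : tree) (b : bool) (f : list bool) : R :=
  match t with
  | Leaf => match f with
            | [x] => if Bool.eqb x b then 1 else 0
            | _ => 0
            end
  | Node p1 t1 p2 t2 =>
      let f1 := firstn (nleaves t1) f in
      let f2 := skipn (nleaves t1) f in
      (trans p1 b false * cond_prob t1 false f1 + trans p1 b true * cond_prob t1 true f1)
      * (trans p2 b false * cond_prob t2 false f2 + trans p2 b true * cond_prob t2 true f2)
  end.

(* Fitch set as a pair (false ∈ FS, true ∈ FS) *)
Fixpoint fitch (t : tree) (f : list bool) : bool * bool :=
  match t with
  | Leaf => match f with
            | [x] => (negb x, x)
            | _ => (false, false)
            end
  | Node _ t1 _ t2 =>
      let '(a1, b1) := fitch t1 (firstn (nleaves t1) f) in
      let '(a2, b2) := fitch t2 (skipn (nleaves t1) f) in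
      if (a1 && a2) || (b1 && b2) then (a1 && a2, b1 && b2)
      else (a1 || a2, b1 || b2)
  end.

Definition mem_fs (s : bool * bool) (b : bool) : bool := if b then snd s else fst s.
Definition card_fs (s : bool * bool) : R :=
  (if fst s then 1 else 0) + (if snd s then 1 else 0).

(* probability that a uniform random element of the Fitch set s equals b *)
Definition mp_score (s : bool * bool) (b : bool) : R :=
  if mem_fs s b then / card_fs s else 0.

Fixpoint chars (n : nat) : list (list bool) :=
  match n with
  | O => [[]]
  | S m => map (cons false) (chars m) ++ map (cons true) (chars m)
  end.

Definition sumR {A} (l : list A) (g : A -> R) : R :=
  fold_right (fun x acc => g x + acc) 0 l.

(* RA_MP of the tree whose root (out-degree 2) is the top vertex of
   Node p1 t1 p2 t2; root state uniform on {0,1}. *)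
Definition RA_node (p1 : R) (t1 : tree) (p2 : R) (t2 : tree) : R :=
  let T := Node p1 t1 p2 t2 in
  sumR [false; true] (fun b =>
    / 2 * sumR (chars (nleaves T)) (fun f => cond_prob T b f * mp_score (fitch T f) b)).

(* RA_MP of the tree with root of out-degree 1: stem edge with substitution
   probability p leading to the top vertex of t; root state uniform. *)
Definition RA_stem (p : R) (t : tree) : R :=
  sumR [false; true] (fun b =>
    / 2 * sumR (chars (nleaves t)) (fun f =>
      (trans p b false * cond_prob t false f + trans p b true * cond_prob t true f)
      * mp_score (fitch t f) b)).

(* Given the state c at the top of a subtree, the Fitch set there is {c}, {not c}
   or {0,1} with probabilities A, B, G that do not depend on c, and B <= A:
   this holds at a leaf, survives an edge with substitution probability at most
   1/2, and survives the Fitch rule at an internal vertex.  The reconstruction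
   accuracy of a tree is then A + G/2, and for T against its two stemmed
   subtrees the claim becomes a polynomial inequality in the two children's
   (A, B, G). *)
From Stdlib Require Import Reals Lra Psatz List Bool.
Import ListNotations.
Open Scope R_scope.

Lemma sumR_ext_in {A} (l : list A) (g h : A -> R) :
  (forall x, In x l -> g x = h x) -> sumR l g = sumR l h.
Proof.
  induction l as [|a l IH]; intros H; simpl; [reflexivity|].
  rewrite H by (left; reflexivity).
  rewrite IH; [reflexivity|intros x Hx; apply H; right; exact Hx].
Qed.

Lemma sumR_app {A} (l1 l2 : list A) (g : A -> R) :
  sumR (l1 ++ l2) g = sumR l1 g + sumR l2 g.
Proof. induction l1 as [|a l1 IH]; simpl; [ring|]. rewrite IH; ring. Qed.

Lemma sumR_map {A B} (k : A -> B) (l : list A) (g : B -> R) :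
  sumR (map k l) g = sumR l (fun x => g (k x)).
Proof. induction l as [|a l IH]; simpl; [reflexivity|]. rewrite IH; reflexivity. Qed.

Lemma sumR_plus {A} (l : list A) (g h : A -> R) :
  sumR l (fun x => g x + h x) = sumR l g + sumR l h.
Proof. induction l as [|a l IH]; simpl; [ring|]. rewrite IH; ring. Qed.

Lemma sumR_mult_l {A} (l : list A) (a : R) (g : A -> R) :
  sumR l (fun x => a * g x) = a * sumR l g.
Proof. induction l as [|x l IH]; simpl; [ring|]. rewrite IH; ring. Qed.

Lemma chars_length n f : In f (chars n) -> length f = n.
Proof.
  revert f; induction n as [|n IH]; intros f Hf; simpl in Hf.
  - destruct Hf as [<-|[]]; reflexivity.
  - apply in_app_iff in Hf.
    destruct Hf as [Hf|Hf]; apply in_map_iff in Hf; destruct Hf as [x [<- Hx]];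
      simpl; rewrite (IH x Hx); reflexivity.
Qed.

Lemma sumR_chars_add n1 n2 (g : list bool -> R) :
  sumR (chars (n1 + n2)) g =
  sumR (chars n1) (fun f1 => sumR (chars n2) (fun f2 => g (f1 ++ f2))).
Proof.
  revert g; induction n1 as [|n1 IH]; intros g; simpl.
  - rewrite Rplus_0_r; reflexivity.
  - rewrite !sumR_app, !sumR_map, !IH; reflexivity.
Qed.

Definition fs_indicator (s x : bool * bool) : R :=
  if Bool.eqb (fst x) (fst s) && Bool.eqb (snd x) (snd s) then 1 else 0.

Definition fs_sum (D h : bool * bool -> R) : R :=
  D (false, false) * h (false, false) + D (false, true) * h (false, true)
  + D (true, false) * h (true, false) + D (true, true) * h (true, true).

Definition fitch_join (s1 s2 : bool * bool) : bool * bool :=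
  let '(a1, b1) := s1 in let '(a2, b2) := s2 in
  if (a1 && a2) || (b1 && b2) then (a1 && a2, b1 && b2)
  else (a1 || a2, b1 || b2).

Lemma sumR_by_fitch {A} (l : list A) (w : A -> R) (F : A -> bool * bool) h :
  sumR l (fun f => w f * h (F f)) =
  fs_sum (fun s => sumR l (fun f => w f * fs_indicator s (F f))) h.
Proof.
  induction l as [|a l IH]; simpl; [unfold fs_sum; ring|].
  rewrite IH; unfold fs_sum, fs_indicator.
  destruct (F a) as [[|] [|]]; simpl; ring.
Qed.

Lemma sumR_sumR_by_fitch {A B} (l1 : list A) (l2 : list B) w1 w2 F1 F2 h :
  sumR l1 (fun f1 => sumR l2 (fun f2 =>
    w1 f1 * w2 f2 * h (fitch_join (F1 f1) (F2 f2)))) =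
  fs_sum (fun s => sumR l1 (fun f => w1 f * fs_indicator s (F1 f)))
    (fun s1 => fs_sum (fun s => sumR l2 (fun f => w2 f * fs_indicator s (F2 f)))
                 (fun s2 => h (fitch_join s1 s2))).
Proof.
  rewrite <- sumR_by_fitch; apply sumR_ext_in; intros f1 _.
  rewrite <- (sumR_by_fitch l2 w2 F2 (fun s2 => h (fitch_join (F1 f1) s2))).
  rewrite <- sumR_mult_l; apply sumR_ext_in; intros; ring.
Qed.

Definition stem_prob (p : R) (t : tree) (c : bool) (f : list bool) : R :=
  trans p c false * cond_prob t false f + trans p c true * cond_prob t true f.

Definition fitch_dist (t : tree) (c : bool) (s : bool * bool) : R :=
  sumR (chars (nleaves t)) (fun f => cond_prob t c f * fs_indicator s (fitch t f)).

Definition fitch_dist_stem (p : R) (t : tree) (c : bool) (s : bool * bool) : R :=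
  sumR (chars (nleaves t)) (fun f => stem_prob p t c f * fs_indicator s (fitch t f)).

Lemma fitch_dist_stem_mix p t c s :
  fitch_dist_stem p t c s =
  trans p c false * fitch_dist t false s + trans p c true * fitch_dist t true s.
Proof.
  unfold fitch_dist_stem, fitch_dist.
  rewrite <- !sumR_mult_l, <- sumR_plus.
  apply sumR_ext_in; intros; unfold stem_prob; ring.
Qed.

Lemma fitch_dist_Node p1 t1 p2 t2 c s :
  fitch_dist (Node p1 t1 p2 t2) c s =
  fs_sum (fitch_dist_stem p1 t1 c) (fun s1 =>
    fs_sum (fitch_dist_stem p2 t2 c) (fun s2 => fs_indicator s (fitch_join s1 s2))).
Proof.
  unfold fitch_dist; cbn [nleaves]; rewrite sumR_chars_add.
  unfold fitch_dist_stem; rewrite <- sumR_sumR_by_fitch.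
  apply sumR_ext_in; intros f1 H1; apply sumR_ext_in; intros f2 _.
  cbn [cond_prob fitch].
  rewrite <- (chars_length _ _ H1), firstn_app, skipn_app, Nat.sub_diag,
    firstn_all, skipn_all; simpl; rewrite app_nil_r.
  unfold stem_prob, fitch_join.
  destruct (fitch t1 f1) as [a1 b1], (fitch t2 f2) as [a2 b2]; reflexivity.
Qed.

(* A = P(FS = {c}), B = P(FS = {not c}), G = P(FS = {0,1}); FS is never empty. *)
Definition fitch_law (A B G : R) (c : bool) (s : bool * bool) : R :=
  match s with
  | (true, true) => G
  | (false, true) => if c then A else B
  | (true, false) => if c then B else A
  | (false, false) => 0
  end.

Definition admissible (A B G : R) : Prop :=
  A + B + G = 1 /\ 0 <= B <= A /\ 0 <= G.

Lemma fitch_dist_Leaf c s : fitch_dist Leaf c s = fitch_law 1 0 0 c s.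
Proof.
  destruct c, s as [[|] [|]]; unfold fitch_dist, fs_indicator; simpl; ring.
Qed.

Lemma fitch_dist_stem_law p t A B G :
  (forall c s, fitch_dist t c s = fitch_law A B G c s) ->
  forall c s, fitch_dist_stem p t c s =
              fitch_law ((1 - p) * A + p * B) ((1 - p) * B + p * A) G c s.
Proof.
  intros Ht c s; rewrite fitch_dist_stem_mix, !Ht.
  destruct c, s as [[|] [|]]; unfold trans; simpl; ring.
Qed.

Lemma admissible_stem p A B G :
  0 <= p <= 1/2 -> admissible A B G ->
  admissible ((1 - p) * A + p * B) ((1 - p) * B + p * A) G.
Proof. unfold admissible; intros Hp (HS & HB & HG); repeat split; nra. Qed.

Lemma fitch_dist_Node_law p1 t1 p2 t2 a1 b1 g1 a2 b2 g2 :
  (forall c s, fitch_dist_stem p1 t1 c s = fitch_law a1 b1 g1 c s) ->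
  (forall c s, fitch_dist_stem p2 t2 c s = fitch_law a2 b2 g2 c s) ->
  forall c s, fitch_dist (Node p1 t1 p2 t2) c s =
    fitch_law (a1 * a2 + a1 * g2 + g1 * a2) (b1 * b2 + b1 * g2 + g1 * b2)
              (a1 * b2 + b1 * a2 + g1 * g2) c s.
Proof.
  intros H1 H2 c s; rewrite fitch_dist_Node; unfold fs_sum; rewrite !H1, !H2.
  destruct c, s as [[|] [|]]; unfold fitch_law, fs_indicator; simpl; ring.
Qed.

Lemma admissible_Node a1 b1 g1 a2 b2 g2 :
  admissible a1 b1 g1 -> admissible a2 b2 g2 ->
  admissible (a1 * a2 + a1 * g2 + g1 * a2) (b1 * b2 + b1 * g2 + g1 * b2)
             (a1 * b2 + b1 * a2 + g1 * g2).
Proof.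
  unfold admissible; intros (S1 & B1 & G1) (S2 & B2 & G2).
  assert (b1 * b2 <= a1 * a2) by nra.
  repeat split; [|nra|nra|nra].
  replace 1 with ((a1 + b1 + g1) * (a2 + b2 + g2)) by (rewrite S1, S2; ring).
  ring.
Qed.

Lemma fitch_dist_law t : valid t ->
  exists A B G, admissible A B G /\
    forall c s, fitch_dist t c s = fitch_law A B G c s.
Proof.
  induction t as [|p1 t1 IH1 p2 t2 IH2]; intros Hv.
  - exists 1, 0, 0; split; [unfold admissible; lra|exact fitch_dist_Leaf].
  - destruct Hv as (Hp1 & Hp2 & Hv1 & Hv2).
    destruct (IH1 Hv1) as (A1 & B1 & G1 & HA1 & HD1).
    destruct (IH2 Hv2) as (A2 & B2 & G2 & HA2 & HD2).
    eexists _, _, _; split.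
    + exact (admissible_Node _ _ _ _ _ _
               (admissible_stem _ _ _ _ Hp1 HA1) (admissible_stem _ _ _ _ Hp2 HA2)).
    + exact (fitch_dist_Node_law _ _ _ _ _ _ _ _ _ _
               (fitch_dist_stem_law _ _ _ _ _ HD1) (fitch_dist_stem_law _ _ _ _ _ HD2)).
Qed.

Definition ra_of_dist (D : bool -> bool * bool -> R) : R :=
  sumR [false; true] (fun b => / 2 * fs_sum (D b) (fun s => mp_score s b)).

Lemma RA_node_dist p1 t1 p2 t2 :
  RA_node p1 t1 p2 t2 = ra_of_dist (fitch_dist (Node p1 t1 p2 t2)).
Proof.
  apply sumR_ext_in; intros b _; f_equal.
  apply (sumR_by_fitch _ (fun f => cond_prob (Node p1 t1 p2 t2) b f)
           (fitch (Node p1 t1 p2 t2)) (fun s => mp_score s b)).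
Qed.

Lemma RA_stem_dist p t : RA_stem p t = ra_of_dist (fitch_dist_stem p t).
Proof.
  apply sumR_ext_in; intros b _; f_equal.
  apply (sumR_by_fitch _ (stem_prob p t b) (fitch t) (fun s => mp_score s b)).
Qed.

Lemma ra_of_law D A B G :
  (forall c s, D c s = fitch_law A B G c s) -> ra_of_dist D = A + / 2 * G.
Proof.
  intros HD; unfold ra_of_dist, fs_sum; simpl; rewrite !HD.
  unfold mp_score, card_fs; simpl.
  replace (/ (1 + 0)) with 1 by field; replace (/ (0 + 1)) with 1 by field;
    replace (/ (1 + 1)) with (/ 2) by field.
  lra.
Qed.

Lemma ra_Node_ge a1 b1 g1 a2 b2 g2 :
  admissible a1 b1 g1 -> admissible a2 b2 g2 ->
  (a1 * a2 + a1 * g2 + g1 * a2) + / 2 * (a1 * b2 + b1 * a2 + g1 * g2)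
  >= / 2 * ((a1 + / 2 * g1) + (a2 + / 2 * g2)).
Proof. unfold admissible; intros; nra. Qed.

Theorem mainTheorem14 (p1 : R) (t1 : tree) (p2 : R) (t2 : tree) :
  valid (Node p1 t1 p2 t2) ->
  RA_node p1 t1 p2 t2 >= / 2 * (RA_stem p1 t1 + RA_stem p2 t2).
Proof.
  intros (Hp1 & Hp2 & Hv1 & Hv2).
  destruct (fitch_dist_law t1 Hv1) as (A1 & B1 & G1 & HA1 & HD1).
  destruct (fitch_dist_law t2 Hv2) as (A2 & B2 & G2 & HA2 & HD2).
  pose proof (fitch_dist_stem_law p1 _ _ _ _ HD1) as HS1.
  pose proof (fitch_dist_stem_law p2 _ _ _ _ HD2) as HS2.
  rewrite RA_node_dist, (ra_of_law _ _ _ _ (fitch_dist_Node_law _ _ _ _ _ _ _ _ _ _ HS1 HS2)).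
  rewrite !RA_stem_dist, (ra_of_law _ _ _ _ HS1), (ra_of_law _ _ _ _ HS2).
  apply ra_Node_ge; apply admissible_stem; assumption.
Qed.
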